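(* For every state $s$ (closed term of type $\mathsf{State}$), the pair $(\Vdash^s_{\mathcal{IR}},\Vdash^s)$ is a monadic realizability relation for the syntactic monad $\mathcal{IR}$; that is, (MR1) if $r\Vdash^s A$ then $\mathsf{unit}\,r\Vdash^s_{\mathcal{IR}}A$; (MR2) if $r\Vdash^s B\to C$ then $\mathsf{star}\,r\,p\Vdash^s_{\mathcal{IR}}C$ for every $p:\|B\|$ with $p\Vdash^s_{\mathcal{IR}}B$; (MR3) if $p\Vdash^s_{\mathcal{IR}}B$ and $q\Vdash^s_{\mathcal{IR}}C$ then $\mathsf{merge}\,p\,q\Vdash^s_{\mathcal{IR}}B\wedge C$ (for all closed formulas $A,B,C$).
   Context: System $T'$: simply typed $\lambda$-calculus with types from atomic types $\mathsf{Unit},\mathsf{Nat},\mathsf{State},\mathsf{Ex}$ (and others) by $\to,\times,+$; constants $\star$, $\langle\cdot,\cdot\rangle$, $\pi_1,\pi_2$, $\mathrm{inl},\mathrm{inr}$, $\mathrm{case}$, $0$, $\mathrm{succ}$, a bounded recursor, and $\mathsf{exmerge}:\mathsf{Ex}\to\mathsf{Ex}\to\mathsf{Ex}$; usual $\beta$, projection and case reductions; $t\leadsto u$: $t$ reduces to $u$; $\bar n$ numerals. States and exceptions: each closed $s:\mathsf{State}$ denotes a finite partial function $[\![s]\!]$ from pairs (a $(k+1)$-ary predicate symbol $P$, a tuple $(m_1,\dots,m_k)\in\mathbb N^k$) to $\mathbb N$ which is sound: $[\![s]\!](P,\vec m)=m$ implies $P(\vec m,m)$. States are ordered by extension $\le$.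 Each closed $e:\mathsf{Ex}$ denotes a partial function $[\![e]\!]$ on states with $s\le[\![e]\!](s)$ whenever defined. $e$ properly extends $s$ iff $[\![e]\!](s)$ is defined and $s<[\![e]\!](s)$. $\mathsf{exmerge}$ satisfies (EX): if $e_1$ and $e_2$ both properly extend $s$ then $\mathsf{exmerge}\,e_1\,e_2$ properly extends $s$. Monad $\mathcal{IR}$: $\mathsf TX=\mathsf{State}\to(X+\mathsf{Ex})$; $\mathsf{unit}=\lambda x\lambda\_.\mathrm{inl}\,x$; $\mathsf{star}=\lambda f\lambda a\lambda s.\mathrm{case}(as)(\lambda x.fxs)\mathrm{inr}$; $\mathsf{merge}=\lambda a\lambda b\lambda s.\mathrm{case}(as)(\lambda x.\mathrm{case}(bs)(\lambda y.\mathrm{inl}\langle x,y\rangle)\mathrm{inr})(\lambda e_1.\mathrm{case}(bs)(\lambda\_.\mathrm{inr}\,e_1)(\lambda e_2.\mathrm{inr}(\mathsf{exmerge}\,e_1e_2)))$. Formulas: first-order arithmetic, decidable atomic predicates, $\bot$ atomic never true. Types: $\|A\|=\mathsf T|A|$, $|P|=\mathsf{Unit}$, $|B\wedge C|=|B|\times|C|$, $|B\vee C|=|B|+|C|$, $|\exists xB|=\mathsf{Nat}\times|B|$, $|B\to C|=|B|\to\|C\|$, $|\forall xB|=\mathsf{Nat}\to\|B\|$. Interactive realizability relations (simultaneous induction on closed $A$): $p\Vdash^s_{\mathcal{IR}}A$ (for $p:\|A\|$) iff either $p\,s\leadsto\mathrm{inl}\,r$ with $r\Vdash^sA$, or $p\,s\leadsto\mathrm{inr}\,e$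 with $e$ properly extending $s$; and $r\Vdash^sP$ iff $r\leadsto\star$ and $P$ true; $r\Vdash^sB\wedge C$ iff $\pi_1r\Vdash^sB$ and $\pi_2r\Vdash^sC$; $r\Vdash^sB\vee C$ iff $r\leadsto\mathrm{inl}\,a$ with $a\Vdash^sB$ or $r\leadsto\mathrm{inr}\,b$ with $b\Vdash^sC$; $r\Vdash^sB\to C$ iff $rp\Vdash^s_{\mathcal{IR}}C$ for all $p\Vdash^sB$; $r\Vdash^s\forall xB$ iff $r\bar n\Vdash^s_{\mathcal{IR}}B[x:=\bar n]$ for all $n$; $r\Vdash^s\exists xB$ iff $\pi_2r\Vdash^sB[x:=\pi_1r]$. *)

From Stdlib Require Import List Arith.
Import ListNotations.

Inductive ty : Type :=
| TUnit | TNat | TState | TEx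
| TAtom (n : nat)
| TArr (A B : ty) | TProd (A B : ty) | TSum (A B : ty).

Inductive const : Type :=
| CStar | CPair | CP1 | CP2 | CInl | CInr | CCase
| CZero | CSucc | CRec | CExmerge
| CState (n : nat)
| CExc (n : nat).

Inductive term : Type :=
| Var (n : nat)
| Lam (t : term)
| App (t u : term)
| Con (c : const).

Inductive has_type : list ty -> term -> ty -> Prop :=
| ht_var G n T : nth_error G n = Some T -> has_type G (Var n) T
| ht_lam G t A B : has_type (A :: G) t B -> has_type G (Lam t) (TArr A B)
| ht_app G t u A B : has_type G t (TArr A B) -> has_type G u A -> has_type G (App t u) B
| ht_star G : has_type G (Con CStar) TUnit
| ht_pair G A B : has_type G (Con CPair) (TArr A (TArr B (TProd A B)))
| ht_p1 G A B : has_type G (Con CP1) (TArr (TProd A B) A)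
| ht_p2 G A B : has_type G (Con CP2) (TArr (TProd A B) B)
| ht_inl G A B : has_type G (Con CInl) (TArr A (TSum A B))
| ht_inr G A B : has_type G (Con CInr) (TArr B (TSum A B))
| ht_case G A B C :
    has_type G (Con CCase) (TArr (TSum A B) (TArr (TArr A C) (TArr (TArr B C) C)))
| ht_zero G : has_type G (Con CZero) TNat
| ht_succ G : has_type G (Con CSucc) (TArr TNat TNat)
| ht_rec G T :
    has_type G (Con CRec) (TArr T (TArr (TArr TNat (TArr T T)) (TArr TNat T)))
| ht_exmerge G : has_type G (Con CExmerge) (TArr TEx (TArr TEx TEx))
| ht_state G n : has_type G (Con (CState n)) TState
| ht_exc G n : has_type G (Con (CExc n)) TEx.

Fixpoint lift (d c : nat) (t : term) : term :=
  match t with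
  | Var n => if c <=? n then Var (n + d) else Var n
  | Lam t => Lam (lift d (S c) t)
  | App t u => App (lift d c t) (lift d c u)
  | Con k => Con k
  end.

Fixpoint subst (k : nat) (u : term) (t : term) : term :=
  match t with
  | Var n => if n =? k then lift k 0 u
             else if k <? n then Var (pred n) else Var n
  | Lam t => Lam (subst (S k) u t)
  | App t1 t2 => App (subst k u t1) (subst k u t2)
  | Con c => Con c
  end.

Notation "'ap2' f a b" := (App (App f a) b) (at level 10, f at level 9, a at level 9, b at level 9).
Notation "'ap3' f a b c" := (App (App (App f a) b) c)
  (at level 10, f at level 9, a at level 9, b at level 9, c at level 9).

Inductive step : term -> term -> Prop :=
| st_beta t u : step (App (Lam t) u) (subst 0 u t)
| st_p1 a b : step (App (Con CP1) (ap2 (Con CPair) a b)) a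
| st_p2 a b : step (App (Con CP2) (ap2 (Con CPair) a b)) b
| st_case_inl a f g : step (ap3 (Con CCase) (App (Con CInl) a) f g) (App f a)
| st_case_inr b f g : step (ap3 (Con CCase) (App (Con CInr) b) f g) (App g b)
| st_rec0 u v : step (ap3 (Con CRec) u v (Con CZero)) u
| st_recS u v n : step (ap3 (Con CRec) u v (App (Con CSucc) n))
                       (ap2 v n (ap3 (Con CRec) u v n))
| st_appl t t' u : step t t' -> step (App t u) (App t' u)
| st_appr t u u' : step u u' -> step (App t u) (App t u')
| st_lam t t' : step t t' -> step (Lam t) (Lam t').

Inductive reds : term -> term -> Prop :=
| reds_refl t : reds t t
| reds_step t u v : step t u -> reds u v -> reds t v.

Fixpoint num (n : nat) : term :=
  match n with 0 => Con CZero | S n => App (Con CSucc) (num n) end.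

Definition TT (X : ty) : ty := TArr TState (TSum X TEx).

(* unit = \x \_. inl x *)
Definition unitT : term := Lam (Lam (App (Con CInl) (Var 1))).
(* star = \f \a \s. case (a s) (\x. f x s) inr *)
Definition starT : term :=
  Lam (Lam (Lam (ap3 (Con CCase) (App (Var 1) (Var 0))
                       (Lam (ap2 (Var 3) (Var 0) (Var 1)))
                       (Con CInr)))).
(* merge = \a \b \s. case (a s) (\x. case (b s) (\y. inl <x,y>) inr)
                               (\e1. case (b s) (\_. inr e1) (\e2. inr (exmerge e1 e2))) *)
Definition mergeT : term :=
  Lam (Lam (Lam (ap3 (Con CCase) (App (Var 2) (Var 0))
    (Lam (ap3 (Con CCase) (App (Var 2) (Var 1))
             (Lam (App (Con CInl) (ap2 (Con CPair) (Var 1) (Var 0))))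
             (Con CInr)))
    (Lam (ap3 (Con CCase) (App (Var 2) (Var 1))
             (Lam (App (Con CInr) (Var 1)))
             (Lam (App (Con CInr) (ap2 (Con CExmerge) (Var 1) (Var 0))))))))).

(* finite partial functions from (predicate symbol, tuple) to nat *)
Definition pfun : Type := nat -> list nat -> option nat.

Definition pfinite (f : pfun) : Prop :=
  exists l : list (nat * list nat), forall P ms, f P ms <> None -> In (P, ms) l.

(* pint P ns = truth of the decidable predicate with symbol P on ns *)
Definition psound (pint : nat -> list nat -> bool) (f : pfun) : Prop :=
  forall P ms m, f P ms = Some m -> pint P (ms ++ [m]) = true.

Definition pext (f g : pfun) : Prop :=
  forall P ms m, f P ms = Some m -> g P ms = Some m.

Definition pext_strict (f g : pfun) : Prop :=
  pext f g /\ exists P ms, f P ms <> g P ms.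

Record setup : Type := {
  pint : nat -> list nat -> bool;
  st_den : term -> pfun;
  ex_den : term -> pfun -> option pfun
}.

Definition closedT (t : term) (T : ty) : Prop := has_type [] t T.

Definition proper_ext (S : setup) (e s : term) : Prop :=
  exists g, ex_den S e (st_den S s) = Some g /\ pext_strict (st_den S s) g.

Definition wf_setup (S : setup) : Prop :=
  (forall s, closedT s TState -> pfinite (st_den S s) /\ psound (pint S) (st_den S s)) /\
  (forall e f g, closedT e TEx -> pfinite f -> psound (pint S) f ->
      ex_den S e f = Some g -> pext f g /\ pfinite g /\ psound (pint S) g) /\
  (forall e1 e2 s, closedT e1 TEx -> closedT e2 TEx -> closedT s TState ->
      proper_ext S e1 s -> proper_ext S e2 s ->
      proper_ext S (ap2 (Con CExmerge) e1 e2) s).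

(** * Formulas (first-order terms are T' terms of type Nat; de Bruijn) *)
Inductive formula : Type :=
| FAtom (P : nat) (ts : list term)
| FBot
| FAnd (B C : formula)
| FOr (B C : formula)
| FImp (B C : formula)
| FAll (B : formula)
| FEx (B : formula).

Fixpoint closed_at (k : nat) (t : term) : Prop :=
  match t with
  | Var n => n < k
  | Lam t => closed_at (S k) t
  | App t u => closed_at k t /\ closed_at k u
  | Con _ => True
  end.

Fixpoint fclosed_at (k : nat) (A : formula) : Prop :=
  match A with
  | FAtom _ ts => Forall (closed_at k) ts
  | FBot => True
  | FAnd B C | FOr B C | FImp B C => fclosed_at k B /\ fclosed_at k C
  | FAll B | FEx B => fclosed_at (S k) B
  end.

Definition closed_formula (A : formula) : Prop := fclosed_at 0 A.

Fixpoint rtype (A : formula) : ty :=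
  match A with
  | FAtom _ _ | FBot => TUnit
  | FAnd B C => TProd (rtype B) (rtype C)
  | FOr B C => TSum (rtype B) (rtype C)
  | FImp B C => TArr (rtype B) (TT (rtype C))
  | FAll B => TArr TNat (TT (rtype B))
  | FEx B => TProd TNat (rtype B)
  end.

(* closing substitution: rho = [u0; u1; ...], u0 for the innermost bound variable;
   msubst (u :: rho) t = msubst rho (t[0 := u]) *)
Fixpoint msubst (rho : list term) (t : term) : term :=
  match rho with
  | [] => t
  | u :: rho' => msubst rho' (subst 0 u t)
  end.

Definition atom_true (S : setup) (P : nat) (ts : list term) : Prop :=
  exists ns, Forall2 (fun t n => reds t (num n)) ts ns /\ pint S P ns = true.

(* real S s rho A r : r ||-^s A[rho]  (A[rho] = A with its free variables closed by rho) *)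
Fixpoint real (S : setup) (s : term) (rho : list term) (A : formula) (r : term)
  {struct A} : Prop :=
  closedT r (rtype A) /\
  match A with
  | FAtom P ts => reds r (Con CStar) /\ atom_true S P (map (msubst rho) ts)
  | FBot => reds r (Con CStar) /\ False
  | FAnd B C => real S s rho B (App (Con CP1) r) /\ real S s rho C (App (Con CP2) r)
  | FOr B C =>
      (exists a, reds r (App (Con CInl) a) /\ real S s rho B a) \/
      (exists b, reds r (App (Con CInr) b) /\ real S s rho C b)
  | FImp B C =>
      forall p, real S s rho B p ->
        closedT (App r p) (TT (rtype C)) /\
        ((exists x, reds (App (App r p) s) (App (Con CInl) x) /\ real S s rho C x) \/
         (exists e, reds (App (App r p) s) (App (Con CInr) e) /\ proper_ext S e s))
  | FAll B =>
      forall n,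
        closedT (App r (num n)) (TT (rtype B)) /\
        ((exists x, reds (App (App r (num n)) s) (App (Con CInl) x) /\
                    real S s (num n :: rho) B x) \/
         (exists e, reds (App (App r (num n)) s) (App (Con CInr) e) /\ proper_ext S e s))
  | FEx B => real S s (App (Con CP1) r :: rho) B (App (Con CP2) r)
  end.

Definition realIR (S : setup) (s : term) (rho : list term) (A : formula) (p : term) : Prop :=
  closedT p (TT (rtype A)) /\
  ((exists x, reds (App p s) (App (Con CInl) x) /\ real S s rho A x) \/
   (exists e, reds (App p s) (App (Con CInr) e) /\ proper_ext S e s)).

From Stdlib Require Import List Arith Lia.
Import ListNotations.

(* unit, star and merge compute by a few head reductions to the expected injection
   (inl/inr), so MR1 and MR2 are immediate and MR3 uses (EX) in the doubly exceptional
   case. The one real point is that a pair <x, y> realizes B /\ C because pi1 <x, y>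
   reduces to x: realizability is closed under expansion of the realizer. For an
   existential this changes the environment from pi1 r to the convertible pi1 r', and an
   implication uses the environment contravariantly, so closure under expansion needs
   confluence of reduction, which we prove with Takahashi's complete developments. *)

Lemma lift_Var d c n : lift d c (Var n) = if c <=? n then Var (n + d) else Var n.
Proof. reflexivity. Qed.

Lemma subst_Var k u n : subst k u (Var n) =
  if n =? k then lift k 0 u else if k <? n then Var (pred n) else Var n.
Proof. reflexivity. Qed.

Ltac var_cases :=
  repeat (rewrite ?lift_Var, ?subst_Var; match goal with
    | |- context [?a =? ?b] => destruct (Nat.eqb_spec a b)
    | |- context [?a <? ?b] => destruct (Nat.ltb_spec a b)
    | |- context [?a <=? ?b] => destruct (Nat.leb_spec a b)
    end); try (f_equal; lia); try lia.

Lemma lift_lift_comm t d d' c c' : c' <= c ->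
  lift d (c + d') (lift d' c' t) = lift d' c' (lift d c t).
Proof.
  induction t in c, c' |- *; intros Hc.
  - var_cases.
  - simpl; f_equal. replace (S (c + d')) with (S c + d') by lia. apply IHt. lia.
  - simpl; f_equal; auto.
  - reflexivity.
Qed.

Lemma lift_lift_add t d d' c c' : c' <= c -> c <= c' + d' ->
  lift d c (lift d' c' t) = lift (d + d') c' t.
Proof.
  induction t in c, c' |- *; intros Hc Hc'.
  - var_cases.
  - simpl; f_equal. apply IHt; lia.
  - simpl; f_equal; auto.
  - reflexivity.
Qed.

Lemma subst_lift_cancel t w d c k : c <= k -> k < c + d ->
  subst k w (lift d c t) = lift (d - 1) c t.
Proof.
  induction t in c, k |- *; intros Hc Hk.
  - var_cases.
  - simpl; f_equal. apply IHt; lia.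
  - simpl; f_equal; auto.
  - reflexivity.
Qed.

Lemma subst_lift_comm t v j d c : c <= j ->
  subst (j + d) v (lift d c t) = lift d c (subst j v t).
Proof.
  induction t in j, c |- *; intros Hc.
  - var_cases. subst. rewrite lift_lift_add by lia. f_equal; lia.
  - simpl; f_equal. replace (S (j + d)) with (S j + d) by lia. apply IHt; lia.
  - simpl; f_equal; auto.
  - reflexivity.
Qed.

Lemma lift_subst_comm t u d c k : k <= c ->
  lift d c (subst k u t) = subst k (lift d (c - k) u) (lift d (S c) t).
Proof.
  induction t in c, k |- *; intros Hk.
  - var_cases. subst.
    replace c with (c - k + k) at 1 by lia. apply lift_lift_comm; lia.
  - simpl; f_equal. rewrite IHt by lia. f_equal.
  - simpl; f_equal; auto.
  - reflexivity.
Qed.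

Lemma subst_subst_comm t u v j k : k <= j ->
  subst j v (subst k u t) = subst k (subst (j - k) v u) (subst (S j) v t).
Proof.
  induction t in j, k |- *; intros Hk.
  - var_cases.
    + subst. replace j with (j - k + k) at 1 by lia. apply subst_lift_comm; lia.
    + subst. rewrite subst_lift_cancel by lia. f_equal; lia.
  - simpl; f_equal. rewrite IHt by lia. f_equal.
  - simpl; f_equal; auto.
  - reflexivity.
Qed.

Lemma reds_trans a b c : reds a b -> reds b c -> reds a c.
Proof. induction 1; intros; auto. econstructor; eauto. Qed.

Lemma reds_one a b : step a b -> reds a b.
Proof. intros. econstructor; eauto. constructor. Qed.

Lemma reds_appl t t' u : reds t t' -> reds (App t u) (App t' u).
Proof. induction 1; econstructor; eauto using step. Qed.

Lemma reds_appr t u u' : reds u u' -> reds (App t u) (App t u').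
Proof. induction 1; econstructor; eauto using step. Qed.

Lemma reds_lam t t' : reds t t' -> reds (Lam t) (Lam t').
Proof. induction 1; econstructor; eauto using step. Qed.

Lemma reds_app t t' u u' : reds t t' -> reds u u' -> reds (App t u) (App t' u').
Proof. intros. eapply reds_trans; [apply reds_appl | apply reds_appr]; eauto. Qed.

Inductive par : term -> term -> Prop :=
| par_var n : par (Var n) (Var n)
| par_con c : par (Con c) (Con c)
| par_lam t t' : par t t' -> par (Lam t) (Lam t')
| par_app t t' u u' : par t t' -> par u u' -> par (App t u) (App t' u')
| par_beta b b' u u' : par b b' -> par u u' -> par (App (Lam b) u) (subst 0 u' b')
| par_p1 a a' b : par a a' -> par (App (Con CP1) (ap2 (Con CPair) a b)) a'
| par_p2 a b b' : par b b' -> par (App (Con CP2) (ap2 (Con CPair) a b)) b'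
| par_case_inl a a' f f' g : par a a' -> par f f' ->
    par (ap3 (Con CCase) (App (Con CInl) a) f g) (App f' a')
| par_case_inr b b' f g g' : par b b' -> par g g' ->
    par (ap3 (Con CCase) (App (Con CInr) b) f g) (App g' b')
| par_rec0 u u' v : par u u' -> par (ap3 (Con CRec) u v (Con CZero)) u'
| par_recS u u' v v' n n' : par u u' -> par v v' -> par n n' ->
    par (ap3 (Con CRec) u v (App (Con CSucc) n)) (ap2 v' n' (ap3 (Con CRec) u' v' n')).

Lemma par_refl t : par t t.
Proof. induction t; constructor; auto. Qed.
#[local] Hint Resolve par_refl : core.

Lemma step_par t u : step t u -> par t u.
Proof. induction 1; try (constructor; auto; fail); econstructor; eauto. Qed.

Lemma par_reds t u : par t u -> reds t u.
Proof.
  induction 1;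
    try (eapply reds_trans; [apply reds_one; constructor |];
         repeat apply reds_app; auto using reds_refl; fail).
  - constructor.
  - constructor.
  - apply reds_lam; auto.
  - apply reds_app; auto.
  - eapply reds_trans; [apply reds_app; [apply reds_lam |]; eauto |].
    apply reds_one. constructor.
Qed.

Lemma par_lift t t' : par t t' -> forall d c, par (lift d c t) (lift d c t').
Proof.
  induction 1; intros; simpl; try (econstructor; eauto; fail).
  - destruct (c <=? n); constructor.
  - rewrite lift_subst_comm, Nat.sub_0_r by lia. constructor; auto.
Qed.

Lemma par_subst t t' : par t t' -> forall k u u', par u u' ->
  par (subst k u t) (subst k u' t').
Proof.
  induction 1; intros; simpl; try (econstructor; eauto; fail).
  - destruct (n =? k); [apply par_lift; auto | destruct (k <? n); constructor].
  - rewrite subst_subst_comm, Nat.sub_0_r by lia. constructor; auto.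
Qed.

Fixpoint cd (t : term) : term :=
  match t with
  | App (Lam b) u => subst 0 (cd u) (cd b)
  | App (Con CP1) (App (App (Con CPair) a) _) => cd a
  | App (Con CP2) (App (App (Con CPair) _) b) => cd b
  | App (App (App (Con CCase) (App (Con CInl) a)) f) _ => App (cd f) (cd a)
  | App (App (App (Con CCase) (App (Con CInr) b)) _) g => App (cd g) (cd b)
  | App (App (App (Con CRec) u) _) (Con CZero) => cd u
  | App (App (App (Con CRec) u) v) (App (Con CSucc) n) =>
      ap2 (cd v) (cd n) (ap3 (Con CRec) (cd u) (cd v) (cd n))
  | App t u => App (cd t) (cd u)
  | Lam b => Lam (cd b)
  | t => t
  end.

(* Projections are excluded: inverting [par (App (Con CP1) x) _] on a variable [x] loops. *)
Ltac inv_par := match goal with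
 | H : par (Con _) _ |- _ => inversion H; subst; clear H
 | H : par (Lam _) _ |- _ => inversion H; subst; clear H
 | H : par (App (Con ?c) _) _ |- _ =>
     match c with CP1 => fail 1 | CP2 => fail 1 | _ => inversion H; subst; clear H end
 | H : par (App (App (Con _) _) _) _ |- _ => inversion H; subst; clear H
 end.

Lemma par_cd_app t u t' u' : par t t' -> par u u' -> par t' (cd t) -> par u' (cd u) ->
  par (App t' u') (cd (App t u)).
Proof.
  intros Ht Hu Ht' Hu'. simpl cd.
  repeat match goal with
  | |- context [match ?x with _ => _ end] => is_var x; destruct x
  end.
  all: try (apply par_app; assumption).
  all: simpl in Ht', Hu'; repeat inv_par; econstructor; eassumption.
Qed.

Lemma par_cd t u : par t u -> par u (cd t).
Proof.
  induction 1; simpl; try assumption; try (constructor; auto; fail).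
  - apply par_cd_app; auto.
  - apply par_subst; auto.
  - repeat apply par_app; auto.
Qed.

Lemma par_reds_strip t v : reds t v -> forall u, par t u -> exists w, reds u w /\ par v w.
Proof.
  induction 1 as [t | t t1 v Ht1 _ IH]; intros u Hu.
  - eauto using reds.
  - destruct (IH (cd t)) as [w [Hw Hvw]]; [apply par_cd, step_par; auto |].
    exists w. split; auto. eapply reds_trans; [apply par_reds, par_cd |]; eauto.
Qed.

Lemma reds_confluent t u v : reds t u -> reds t v -> exists w, reds u w /\ reds v w.
Proof.
  intros Hu. revert v. induction Hu as [t | t t1 u Ht1 _ IH]; intros v Hv.
  - eauto using reds.
  - destruct (par_reds_strip _ _ Hv _ (step_par _ _ Ht1)) as [w1 [Hw1 Hvw1]].
    destruct (IH _ Hw1) as [w [Huw Hw]].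
    exists w. split; auto. eapply reds_trans; [apply par_reds |]; eauto.
Qed.

Lemma step_Con c y : ~ step (Con c) y.
Proof. inversion 1. Qed.

Lemma num_irreducible m y : ~ step (num m) y.
Proof.
  induction m in y |- *; simpl; intros Hy; inversion Hy; subst.
  all: solve [eapply step_Con; eauto | eapply IHm; eauto].
Qed.

Lemma num_reds_eq n x : reds (num n) x -> x = num n.
Proof. inversion 1; subst; [reflexivity | exfalso; eapply num_irreducible; eauto]. Qed.

Definition conv a b := exists c, reds a c /\ reds b c.

Lemma conv_refl a : conv a a.
Proof. exists a; split; constructor. Qed.

Lemma conv_sym a b : conv a b -> conv b a.
Proof. intros [c [A B]]; exists c; auto. Qed.

Lemma conv_trans a b c : conv a b -> conv b c -> conv a c.
Proof.
  intros [x [A B]] [y [C D]].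
  destruct (reds_confluent _ _ _ B C) as [w [E F]].
  exists w. split; eapply reds_trans; eauto.
Qed.

Lemma reds_conv a b : reds a b -> conv a b.
Proof. exists b; split; auto. constructor. Qed.

Lemma conv_reds_num a b n : conv a b -> reds a (num n) -> reds b (num n).
Proof.
  intros [c [A B]] H.
  destruct (reds_confluent _ _ _ H A) as [w [E F]].
  apply num_reds_eq in E. subst. eapply reds_trans; eauto.
Qed.

Lemma reds_subst k t t' u u' : reds t t' -> reds u u' -> reds (subst k u t) (subst k u' t').
Proof.
  intros Ht Hu. apply reds_trans with (subst k u t').
  - induction Ht; [constructor | eapply reds_trans; eauto].
    apply par_reds, par_subst; auto using step_par.
  - induction Hu; [constructor | eapply reds_trans; eauto].
    apply par_reds, par_subst; auto using step_par.
Qed.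

Lemma msubst_conv rho a b : conv a b -> conv (msubst rho a) (msubst rho b).
Proof.
  induction rho as [| w rho IH] in a, b |- *; simpl; auto.
  intros [c [A B]]. apply IH. exists (subst 0 w c).
  split; apply reds_subst; auto; constructor.
Qed.

Lemma Forall2_conv_refl rho : Forall2 conv rho rho.
Proof. induction rho; constructor; auto using conv_refl. Qed.

Lemma msubst_env_conv rho rho' t : Forall2 conv rho rho' ->
  conv (msubst rho t) (msubst rho' t).
Proof.
  intros HR. induction HR as [| u u' rho rho' [c [A B]] _ IH] in t |- *; simpl.
  - apply conv_refl.
  - eapply conv_trans; [apply msubst_conv | apply IH].
    exists (subst 0 c t). split; apply reds_subst; auto; constructor.
Qed.

Lemma has_type_closed_at G t T : has_type G t T -> closed_at (length G) t.
Proof.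
  induction 1; simpl; auto.
  apply nth_error_Some. rewrite H. discriminate.
Qed.

Lemma closed_at_lift t k d c : closed_at k t -> k <= c -> lift d c t = t.
Proof.
  induction t in k, c |- *; simpl; intros Hk Hc.
  - destruct (Nat.leb_spec c n); auto. lia.
  - f_equal. apply IHt with (S k); auto. lia.
  - destruct Hk. f_equal; eauto.
  - reflexivity.
Qed.

Lemma closed_at_subst t k j u : closed_at k t -> k <= j -> subst j u t = t.
Proof.
  induction t in k, j |- *; simpl; intros Hk Hj.
  - destruct (Nat.eqb_spec n j); [lia |]. destruct (Nat.ltb_spec j n); auto. lia.
  - f_equal. apply IHt with (S k); auto. lia.
  - destruct Hk. f_equal; eauto.
  - reflexivity.
Qed.

Lemma closedT_closed t T : closedT t T -> closed_at 0 t.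
Proof. apply has_type_closed_at. Qed.

Lemma has_type_lift G1 G2 D t T : has_type (G1 ++ G2) t T ->
  has_type (G1 ++ D ++ G2) (lift (length D) (length G1) t) T.
Proof.
  remember (G1 ++ G2) as G eqn:HG. intros Ht.
  induction Ht in G1, HG |- *; subst; simpl; try (econstructor; eauto; fail).
  - destruct (Nat.leb_spec (length G1) n); constructor.
    + rewrite nth_error_app2 in H by auto.
      rewrite !nth_error_app2 by lia. rewrite <- H. f_equal. lia.
    + rewrite nth_error_app1 in H by auto. rewrite nth_error_app1 by auto. auto.
  - constructor. apply (IHHt (A :: G1)). auto.
Qed.

Lemma has_type_subst G1 U G2 t u T : has_type (G1 ++ U :: G2) t T -> has_type G2 u U ->
  has_type (G1 ++ G2) (subst (length G1) u t) T.
Proof.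
  remember (G1 ++ U :: G2) as G eqn:HG. intros Ht Hu.
  induction Ht in G1, HG |- *; subst; simpl; try (econstructor; eauto; fail).
  - destruct (Nat.eqb_spec n (length G1)) as [-> | Hne].
    + rewrite nth_error_app2, Nat.sub_diag in H by lia. simpl in H. inversion H; subst.
      apply (has_type_lift [] G2 G1). auto.
    + destruct (Nat.ltb_spec (length G1) n); constructor.
      * rewrite nth_error_app2 in H by lia. rewrite nth_error_app2 by lia.
        destruct (n - length G1) eqn:E; [lia |]. simpl in H. rewrite <- H. f_equal. lia.
      * rewrite nth_error_app1 in H by lia. rewrite nth_error_app1 by lia. auto.
  - constructor. apply (IHHt (A :: G1)). auto.
Qed.

Ltac inv_typing := repeat match goal with
  | H : has_type _ (App _ _) _ |- _ => inversion H; subst; clear H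
  | H : has_type _ (Con _) _ |- _ => inversion H; subst; clear H
  | H : has_type _ (Lam _) _ |- _ => inversion H; subst; clear H
  end.

Lemma step_preserves_type t t' G T : step t t' -> has_type G t T -> has_type G t' T.
Proof.
  intros Hs. induction Hs in G, T |- *; intros Ht.
  1: inv_typing; apply (has_type_subst [] A G); auto.
  1-6: inv_typing; repeat econstructor; eauto.
  all: inversion Ht; subst; econstructor; eauto.
Qed.

Lemma reds_preserves_type t t' G T : reds t t' -> has_type G t T -> has_type G t' T.
Proof. induction 1; eauto using step_preserves_type. Qed.

Lemma closedT_num n : closedT (num n) TNat.
Proof. induction n; simpl; repeat econstructor; eauto. Qed.

Lemma real_closedT S s rho A r : real S s rho A r -> closedT r (rtype A).
Proof. destruct A; simpl; tauto. Qed.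

Lemma atom_args_env_conv rho rho' ts ns : Forall2 conv rho rho' ->
  Forall2 (fun t n => reds t (num n)) (map (msubst rho) ts) ns ->
  Forall2 (fun t n => reds t (num n)) (map (msubst rho') ts) ns.
Proof.
  intros HR. induction ts in ns |- *; simpl; inversion 1; subst; constructor; auto.
  eapply conv_reds_num; eauto. apply msubst_env_conv; auto.
Qed.

Lemma real_expand S s A rho rho' r r' : Forall2 conv rho rho' ->
  closedT r' (rtype A) -> reds r' r -> real S s rho A r -> real S s rho' A r'.
Proof.
  induction A in rho, rho', r, r' |- *; intros HR Hty Hred [_ Hr]; simpl in *; split; auto.
  - destruct Hr as [Hs [ns [F Hp]]]. split; [eapply reds_trans; eauto |].
    exists ns. split; auto. eapply atom_args_env_conv; eauto.
  - destruct Hr as [_ []].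
  - destruct Hr as [Hr1 Hr2]. split.
    + eapply IHA1; [exact HR | repeat econstructor; eauto | apply reds_appr, Hred | exact Hr1].
    + eapply IHA2; [exact HR | repeat econstructor; eauto | apply reds_appr, Hred | exact Hr2].
  - destruct Hr as [[a [Ha Ra]] | [b [Hb Rb]]]; [left; exists a | right; exists b];
      (split; [eapply reds_trans; eauto | eauto using real_closedT, reds]).
  - intros p Hp.
    assert (Hp' : real S s rho A1 p).
    { eapply IHA1; eauto using real_closedT, reds.
      apply (Forall2_impl conv (fun b a => conv_sym a b)), Forall2_flip; auto. }
    destruct (Hr p Hp') as [_ [[x [Hx Rx]] | [e [He Pe]]]];
      (split; [econstructor; [exact Hty | eapply real_closedT, Hp] |]).
    + left. exists x. split; eauto using real_closedT, reds.
      eapply reds_trans; [apply reds_appl, reds_appl |]; eauto.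
    + right. exists e. split; auto.
      eapply reds_trans; [apply reds_appl, reds_appl |]; eauto.
  - intros n. destruct (Hr n) as [_ [[x [Hx Rx]] | [e [He Pe]]]];
      (split; [econstructor; [exact Hty | apply closedT_num] |]).
    + left. exists x. split.
      * eapply reds_trans; [apply reds_appl, reds_appl |]; eauto.
      * eapply IHA; eauto using real_closedT, reds, conv_refl.
    + right. exists e. split; auto.
      eapply reds_trans; [apply reds_appl, reds_appl |]; eauto.
  - eapply IHA; [| | | exact Hr].
    + constructor; [apply conv_sym, reds_conv, reds_appr |]; auto.
    + repeat econstructor; eauto.
    + apply reds_appr; auto.
Qed.

Lemma closed_lift t : closed_at 0 t -> forall d c, lift d c t = t.
Proof. intros Ht d c. apply (closed_at_lift t 0); auto with arith. Qed.

Lemma closed_subst t : closed_at 0 t -> forall k u, subst k u t = t.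
Proof. intros Ht k u. apply (closed_at_subst t 0); auto with arith. Qed.

Ltac simpl_closed := repeat match goal with
  | H : closed_at 0 ?x |- context [lift _ _ ?x] => rewrite (closed_lift _ H)
  | H : closed_at 0 ?x |- context [subst _ _ ?x] => rewrite (closed_subst _ H)
  end.

Ltac head_step :=
  eapply reds_step;
  [repeat first [apply st_beta | apply st_case_inl | apply st_case_inr | apply st_appl] |];
  simpl; simpl_closed.

Lemma reds_case a a' f g : reds a a' -> reds (ap3 (Con CCase) a f g) (ap3 (Con CCase) a' f g).
Proof. intros. apply reds_appl, reds_appl, reds_appr; auto. Qed.

Lemma unitT_reds r s : closed_at 0 r -> reds (ap2 unitT r s) (App (Con CInl) r).
Proof. intros. unfold unitT. do 2 head_step. constructor. Qed.

Section StarReduction.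
Variables r p s : term.
Hypotheses (r_closed : closed_at 0 r) (p_closed : closed_at 0 p) (s_closed : closed_at 0 s).

Lemma starT_reds : reds (ap3 starT r p s)
  (ap3 (Con CCase) (App p s) (Lam (ap2 r (Var 0) s)) (Con CInr)).
Proof. unfold starT. do 3 head_step. constructor. Qed.

Lemma starT_reds_inl x : closed_at 0 x ->
  reds (App p s) (App (Con CInl) x) -> reds (ap3 starT r p s) (ap2 r x s).
Proof.
  intros Hx Hps. eapply reds_trans; [apply starT_reds |].
  eapply reds_trans; [apply reds_case, Hps |]. do 2 head_step. constructor.
Qed.

Lemma starT_reds_inr e :
  reds (App p s) (App (Con CInr) e) -> reds (ap3 starT r p s) (App (Con CInr) e).
Proof.
  intros Hps. eapply reds_trans; [apply starT_reds |].
  eapply reds_trans; [apply reds_case, Hps |]. head_step. constructor.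
Qed.

End StarReduction.

Section MergeReduction.
Variables p q s : term.
Hypotheses (p_closed : closed_at 0 p) (q_closed : closed_at 0 q) (s_closed : closed_at 0 s).

Lemma mergeT_reds_inl x : closed_at 0 x -> reds (App p s) (App (Con CInl) x) ->
  reds (ap3 mergeT p q s)
    (ap3 (Con CCase) (App q s) (Lam (App (Con CInl) (ap2 (Con CPair) x (Var 0)))) (Con CInr)).
Proof.
  intros Hx Hps. unfold mergeT. do 3 head_step.
  eapply reds_trans; [apply reds_case, Hps |]. do 2 head_step. constructor.
Qed.

Lemma mergeT_reds_inr e : closed_at 0 e -> reds (App p s) (App (Con CInr) e) ->
  reds (ap3 mergeT p q s)
    (ap3 (Con CCase) (App q s) (Lam (App (Con CInr) e))
       (Lam (App (Con CInr) (ap2 (Con CExmerge) e (Var 0))))).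
Proof.
  intros He Hps. unfold mergeT. do 3 head_step.
  eapply reds_trans; [apply reds_case, Hps |]. do 2 head_step. constructor.
Qed.

Lemma mergeT_reds_inl_inl x y : closed_at 0 x -> closed_at 0 y ->
  reds (App p s) (App (Con CInl) x) -> reds (App q s) (App (Con CInl) y) ->
  reds (ap3 mergeT p q s) (App (Con CInl) (ap2 (Con CPair) x y)).
Proof.
  intros Hx Hy Hps Hqs. eapply reds_trans; [apply (mergeT_reds_inl x Hx Hps) |].
  eapply reds_trans; [apply reds_case, Hqs |]. do 2 head_step. constructor.
Qed.

Lemma mergeT_reds_inl_inr x e : closed_at 0 x ->
  reds (App p s) (App (Con CInl) x) -> reds (App q s) (App (Con CInr) e) ->
  reds (ap3 mergeT p q s) (App (Con CInr) e).
Proof.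
  intros Hx Hps Hqs. eapply reds_trans; [apply (mergeT_reds_inl x Hx Hps) |].
  eapply reds_trans; [apply reds_case, Hqs |]. head_step. constructor.
Qed.

Lemma mergeT_reds_inr_inl e y : closed_at 0 e -> closed_at 0 y ->
  reds (App p s) (App (Con CInr) e) -> reds (App q s) (App (Con CInl) y) ->
  reds (ap3 mergeT p q s) (App (Con CInr) e).
Proof.
  intros He Hy Hps Hqs. eapply reds_trans; [apply (mergeT_reds_inr e He Hps) |].
  eapply reds_trans; [apply reds_case, Hqs |]. do 2 head_step. constructor.
Qed.

Lemma mergeT_reds_inr_inr e1 e2 : closed_at 0 e1 -> closed_at 0 e2 ->
  reds (App p s) (App (Con CInr) e1) -> reds (App q s) (App (Con CInr) e2) ->
  reds (ap3 mergeT p q s) (App (Con CInr) (ap2 (Con CExmerge) e1 e2)).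
Proof.
  intros He1 He2 Hps Hqs. eapply reds_trans; [apply (mergeT_reds_inr e1 He1 Hps) |].
  eapply reds_trans; [apply reds_case, Hqs |]. do 2 head_step. constructor.
Qed.

End MergeReduction.

Lemma unitT_closedT X : closedT unitT (TArr X (TT X)).
Proof. repeat econstructor. Qed.

Lemma starT_closedT B C : closedT starT (TArr (TArr B (TT C)) (TArr (TT B) (TT C))).
Proof. repeat econstructor. Qed.

Lemma mergeT_closedT B C : closedT mergeT (TArr (TT B) (TArr (TT C) (TT (TProd B C)))).
Proof. repeat econstructor. Qed.

Lemma inr_closedT p X s e : closedT p (TT X) -> closedT s TState ->
  reds (App p s) (App (Con CInr) e) -> closedT e TEx.
Proof.
  intros Hp Hs Hps.
  assert (Hty : has_type [] (App (Con CInr) e) (TSum X TEx))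
    by (eapply reds_preserves_type; [exact Hps | econstructor; eauto]).
  inv_typing. auto.
Qed.

Section MonadicRealizability.
Variables (S : setup) (s : term) (rho : list term).
Hypothesis s_closedT : closedT s TState.

Lemma realIR_unit A r : real S s rho A r -> realIR S s rho A (App unitT r).
Proof.
  intros Hr. pose proof (real_closedT _ _ _ _ _ Hr) as Hrt.
  split; [econstructor; [apply unitT_closedT | exact Hrt] |].
  left. exists r. split; auto.
  apply unitT_reds. eapply closedT_closed; eauto.
Qed.

Lemma realIR_star B C r p : real S s rho (FImp B C) r -> realIR S s rho B p ->
  realIR S s rho C (ap2 starT r p).
Proof.
  intros [Hrt Hr] [Hpt [[x [Hx Rx]] | [e [He Pe]]]].
  all: split; [econstructor; [econstructor; [apply starT_closedT | exact Hrt] | exact Hpt] |].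
  - destruct (Hr x Rx) as [_ [[y [Hy Ry]] | [e [He Pe]]]]; [left; exists y | right; exists e].
    all: split; auto; eapply reds_trans; [| eassumption].
    all: apply starT_reds_inl; eauto using closedT_closed, real_closedT.
  - right. exists e. split; auto.
    apply starT_reds_inr; eauto using closedT_closed.
Qed.

Lemma real_pair B C x y : real S s rho B x -> real S s rho C y ->
  real S s rho (FAnd B C) (ap2 (Con CPair) x y).
Proof.
  intros Rx Ry. pose proof (real_closedT _ _ _ _ _ Rx) as Hxt.
  pose proof (real_closedT _ _ _ _ _ Ry) as Hyt.
  assert (Hconv : Forall2 conv rho rho) by apply Forall2_conv_refl.
  split; [repeat econstructor; eauto |]. split.
  - eapply real_expand; eauto; [repeat econstructor; eauto | apply reds_one; constructor].
  - eapply real_expand; eauto; [repeat econstructor; eauto | apply reds_one; constructor].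
Qed.

Hypothesis exmerge_proper : forall e1 e2, closedT e1 TEx -> closedT e2 TEx ->
  proper_ext S e1 s -> proper_ext S e2 s -> proper_ext S (ap2 (Con CExmerge) e1 e2) s.

Lemma realIR_merge B C p q : realIR S s rho B p -> realIR S s rho C q ->
  realIR S s rho (FAnd B C) (ap2 mergeT p q).
Proof.
  intros [Hpt Hp] [Hqt Hq].
  split; [econstructor; [econstructor; [apply mergeT_closedT | exact Hpt] | exact Hqt] |].
  destruct Hp as [[x [Hx Rx]] | [e1 [He1 Pe1]]], Hq as [[y [Hy Ry]] | [e2 [He2 Pe2]]].
  - left. exists (ap2 (Con CPair) x y). split; [| apply real_pair; auto].
    apply mergeT_reds_inl_inl; eauto using closedT_closed, real_closedT.
  - right. exists e2. split; auto.
    apply mergeT_reds_inl_inr with (x := x); eauto using closedT_closed, real_closedT.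
  - right. exists e1. split; auto.
    apply mergeT_reds_inr_inl with (y := y); eauto using closedT_closed, real_closedT, inr_closedT.
  - right. exists (ap2 (Con CExmerge) e1 e2). split; eauto using inr_closedT.
    apply mergeT_reds_inr_inr; eauto using closedT_closed, inr_closedT.
Qed.

End MonadicRealizability.

Theorem mainTheorem4 :
  forall (S : setup), wf_setup S ->
  forall s : term, closedT s TState ->
    (forall (A : formula) (r : term), closed_formula A ->
        real S s [] A r -> realIR S s [] A (App unitT r)) /\
    (forall (B C : formula) (r p : term), closed_formula B -> closed_formula C ->
        real S s [] (FImp B C) r -> realIR S s [] B p ->
        realIR S s [] C (ap2 starT r p)) /\
    (forall (B C : formula) (p q : term), closed_formula B -> closed_formula C ->
        realIR S s [] B p -> realIR S s [] C q ->
        realIR S s [] (FAnd B C) (ap2 mergeT p q)).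
Proof.
  intros S [_ [_ exmerge_proper]] s Hs. split; [| split].
  - intros A r _. apply realIR_unit.
  - intros B C r p _ _. apply realIR_star; auto.
  - intros B C p q _ _. apply realIR_merge; auto.
Qed.
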